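(* Let $\alpha=(a_1,\ldots,a_k)$ be a composition of a positive integer $n$. Then \[\zeta_-(M_\alpha)=\begin{cases}\dfrac{(-1)^{k_e(\alpha)}}{2^{2\lfloor k_o(\alpha)/2\rfloor}}\,C\bigl(0,\lfloor k_o(\alpha)/2\rfloor\bigr) & \text{if } a_k \text{ is odd},\\ 0 & \text{if } a_k\text{ is even;}\end{cases}\] \[\zeta_+(M_\alpha)=\begin{cases}\dfrac{(-1)^{k_e(\alpha)+1}}{2^{k_o(\alpha)}}\,C\bigl(1,k_o(\alpha)/2-1\bigr) & \text{if } a_1 \text{ and } a_k \text{ are odd and } n \text{ is even},\\ 1 & \text{if } \alpha=(n) \text{ and } n \text{ is even},\\ 0&\text{otherwise.}\end{cases}\] Also $\zeta_-(1)=\zeta_+(1)=1$.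
   Context: $\Bbbk$ is a field of characteristic $\neq 2$. A composition $\alpha=(a_1,\ldots,a_k)$ of $n\ge 0$ is a sequence of positive integers with sum $|\alpha|=n$; $k(\alpha)=k$ is its number of parts, $k_e(\alpha)$ and $k_o(\alpha)$ its numbers of even and odd parts; $()$ is the empty composition. ${\mathcal{Q}Sym}$ is the Hopf algebra of quasi-symmetric functions over $\Bbbk$ (in variables $x_1,x_2,\ldots$), graded by degree and connected, with monomial basis $M_\alpha=\sum_{i_1<\cdots<i_k}x_{i_1}^{a_1}\cdots x_{i_k}^{a_k}$ ($M_{()}=1$), product the ordinary product, coproduct $\Delta(M_\alpha)=\sum_{i=0}^k M_{(a_1,\ldots,a_i)}\otimes M_{(a_{i+1},\ldots,a_k)}$ and counit $\epsilon(M_\alpha)=1$ if $\alpha=()$, $0$ otherwise. Convolution of functionals: $\rho\psi=m\circ(\rho\otimes\psi)\circ\Delta$. Characters are algebra morphisms ${\mathcal{Q}Sym}\to\Bbbk$; they form a group under convolution. For a functional $\varphi$, $\bar\varphi(h)=(-1)^n\varphi(h)$ on homogeneous $h$ of degree $n$; $\varphi$ is even if $\bar\varphi=\varphi$, odd if $\bar\varphi=\varphi^{-1}$. Every character $\varphi$ factors uniquely as $\varphi=\varphi_+\varphi_-$ with $\varphi_+$ an even character and $\varphi_-$ an odd character. The universal character $\zeta$ is $\zeta(f)=f(1,0,0,\ldots)$; thus $\zeta(M_\alpha)=1$ if $\alpha=()$ or $\alpha=(n)$, and $0$ otherwise. $\zeta_+,\zeta_-$ denote its even and odd parts. The bivariate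 Catalan numbers are $C(m,n)=\frac{(2m)!(2n)!}{m!(m+n)!n!}$. *)

From mathcomp Require Import all_boot all_order all_algebra.
Set Implicit Arguments. Unset Strict Implicit. Unset Printing Implicit Defensive.
Import Order.TTheory GRing.Theory Num.Theory.
Local Open Scope ring_scope.

(* A linear functional on
   QSym is represented by its values on the monomial basis M_alpha, i.e. by a
   function on compositions (values on non-compositions are irrelevant). *)
Definition is_composition (a : seq nat) : bool := all (fun x => 0 < x)%N a.

Definition ke (a : seq nat) : nat := count (fun x => ~~ odd x) a.
Definition ko (a : seq nat) : nat := count odd a.

(* Quasi-shuffle (stuffle) product: M_a * M_b = sum_{g in qsh a b} M_g
   (with multiplicity). *)
Fixpoint qsh (a b : seq nat) {struct a} : seq (seq nat) :=
  match a with
  | [::] => [:: b]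
  | x :: a' =>
    let fix qsh_a (b : seq nat) : seq (seq nat) :=
      match b with
      | [::] => [:: a]
      | y :: b' => map (cons x) (qsh a' b) ++ map (cons y) (qsh_a b')
                   ++ map (cons (x + y)%N) (qsh a' b')
      end in qsh_a b
  end.

Section Functionals.
Variable K : fieldType.

Definition eps (a : seq nat) : K := if a is [::] then 1 else 0.

Definition conv (f g : seq nat -> K) (a : seq nat) : K :=
  \sum_(i < (size a).+1) f (take i a) * g (drop i a).

Definition bar (f : seq nat -> K) (a : seq nat) : K := (-1) ^+ sumn a * f a.

Definition is_character (f : seq nat -> K) : Prop :=
  f [::] = 1 /\
  forall a b, is_composition a -> is_composition b ->
    f a * f b = \sum_(g <- qsh a b) f g.

Definition is_even (f : seq nat -> K) : Prop :=
  forall a, is_composition a -> bar f a = f a.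

Definition is_odd (f : seq nat -> K) : Prop :=
  forall a, is_composition a ->
    conv (bar f) f a = eps a /\ conv f (bar f) a = eps a.

(* universal character zeta(f) = f(1,0,0,...) *)
Definition zeta (a : seq nat) : K :=
  match a with [::] => 1 | [:: _] => 1 | _ => 0 end.

End Functionals.

(* bivariate Catalan numbers C(m,n) = (2m)!(2n)!/(m!(m+n)!n!) (an integer) *)
Definition bcat (m n : nat) : nat :=
  ((m.*2)`! * (n.*2)`!) %/ (m`! * (m + n)`! * n`!).

(* Uniqueness: if char K <> 2, zeta_- and zeta_+ are determined by the
   identities zeta = zeta_+ zeta_-, bar(zeta_-) zeta_- = eps, the evenness of
   zeta_+ and their value 1 at the empty composition (nothing else of the
   character property is needed).  Indeed, by induction on the length of
   alpha, the coefficients of M_alpha in the two identities determine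
   zeta_-(alpha) + zeta_+(alpha) and ((-1)^|alpha| + 1) zeta_-(alpha), while
   evenness forces zeta_+(alpha) = 0 when |alpha| is odd.
   It remains to check both identities for the explicit formulas.  Only the
   cuts of alpha that are empty or end with an odd part contribute to the
   convolutions, indexed by the number of odd parts before the cut, so these
   become Cauchy products of the coefficients c_m = C(2m,m)/4^m of
   (1 - x)^(-1/2) and e_m of (1 - x)^(1/2): the identities reduce to
   c^2 = 1/(1 - x) and e c = 1. *)

From mathcomp Require Import all_boot all_order all_algebra.
From mathcomp Require Import zify ring.
Set Implicit Arguments.
Unset Strict Implicit.
Unset Printing Implicit Defensive.
Import GRing.Theory.

Lemma sum_index_mul_sym M (x : nat -> nat) :
  (forall t, t <= M -> x (M - t) = x t) ->
  (\sum_(t < M.+1) t * x t).*2 = M * \sum_(t < M.+1) x t.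
Proof.
move=> x_sym.
have rev_sum : \sum_(t < M.+1) (M - t) * x t = \sum_(t < M.+1) t * x t.
  rewrite (reindex_inj rev_ord_inj); apply: eq_bigr => t _ /=.
  by rewrite subSS subKn ?x_sym // -ltnS.
rewrite -addnn -{1}rev_sum -big_split big_distrr /=.
by apply: eq_bigr => t _; rewrite -mulnDl subnK // -ltnS.
Qed.

Lemma mul_bin_center_succ t : t.+1 * 'C(t.+1.*2, t.+1) = (t.*2.+1).*2 * 'C(t.*2, t).
Proof.
have diag := mul_bin_diag (t.+1.*2) t.
have down := mul_bin_down (t.*2.+1) t.
rewrite doubleS /= in diag down *.
rewrite -diag; move: down; set C := 'C(_, t); nia.
Qed.

Lemma sum_bin_center M :
  \sum_(t < M.+1) 'C(t.*2, t) * 'C((M - t).*2, M - t) = 4 ^ M.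
Proof.
pose x N t := 'C(t.*2, t) * 'C((N - t).*2, N - t).
have x_sym N t : t <= N -> x N (N - t) = x N t by move=> le_tN; rewrite /x subKn // mulnC.
have T_succ N : \sum_(t < N.+2) t * x N.+1 t =
                (\sum_(t < N.+1) t * x N t).*2.*2 + (\sum_(t < N.+1) x N t).*2.
  rewrite big_ord_recl mul0n add0n -!muln2 !big_distrl -big_split /=.
  apply: eq_bigr => t _; rewrite /x /= subSS mulnA mul_bin_center_succ.
  by rewrite -!muln2; ring.
elim: M => [|M IH]; first by rewrite big_ord1.
change (\sum_(t < M.+2) x M.+1 t = 4 ^ M.+1); change (\sum_(t < M.+1) x M t = 4 ^ M) in IH.
apply/eqP; rewrite -(eqn_pmul2l (ltn0Sn M)) -sum_index_mul_sym; last exact: x_sym.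
rewrite T_succ -!doubleD sum_index_mul_sym; last exact: x_sym.
by rewrite IH expnS; apply/eqP; lia.
Qed.

Lemma fact_double_bin_center m : (m.*2)`! = 'C(m.*2, m) * (m`! * m`!).
Proof.
have le_m_2m : m <= m.*2 by rewrite -addnn leq_addr.
by rewrite -(bin_fact le_m_2m) -addnn addnK.
Qed.

Lemma bcat0E m : bcat 0 m = 'C(m.*2, m).
Proof.
by rewrite /bcat /= !mul1n add0n fact_double_bin_center mulnK // muln_gt0 fact_gt0.
Qed.

Lemma bcat1E n : bcat 1 n + 'C(n.+1.*2, n.+1) = 4 * 'C(n.*2, n).
Proof.
have := mul_bin_center_succ n.
rewrite /bcat add1n factS [(n.*2)`!]fact_double_bin_center /= !mul1n.
set C := 'C(n.*2, n); set C' := 'C(_, _) => mul_C'.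
have C'_le : C' <= 4 * C by rewrite -(leq_pmul2l (ltn0Sn n)) mul_C'; nia.
have catalan : 2 * C = (4 * C - C') * n.+1 by nia.
by rewrite mulnA catalan -!mulnA mulnK ?muln_gt0 ?fact_gt0 // subnK.
Qed.

Lemma count_take_drop {T : Type} (p : pred T) i s :
  (count p (take i s) + count p (drop i s))%N = count p s.
Proof. by rewrite -count_cat cat_take_drop. Qed.

Lemma head_take {T : Type} (x : T) i s :
  head x (take i s) = if (0 < i)%N then head x s else x.
Proof. by case: s i => [|y s] [|i]. Qed.

Lemma last_drop {T : Type} (x : T) i s :
  last x (drop i s) = if (i < size s)%N then last x s else x.
Proof.
elim: s i => [|y s IH] [|i] //=; rewrite IH ltnS.
by case: s {IH} => [|z s] //=; rewrite ltn0.
Qed.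

Lemma odd_sumn s : odd (sumn s) = odd (ko s).
Proof. by elim: s => //= x s IH; rewrite oddD IH /ko /=; case: (odd x). Qed.

Lemma count_last_gt0 {T : Type} (p : pred T) x s : p (last x s) -> (0 < count p (x :: s))%N.
Proof.
elim: s x => [|y s IH] x /= p_last; first by rewrite p_last.
exact: leq_trans (IH y p_last) (leq_addl _ _).
Qed.

Lemma is_composition_take i a : is_composition a -> is_composition (take i a).
Proof. by rewrite -{1}(cat_take_drop i a) /is_composition all_cat => /andP[]. Qed.

Lemma is_composition_drop i a : is_composition a -> is_composition (drop i a).
Proof. by rewrite -{1}(cat_take_drop i a) /is_composition all_cat => /andP[]. Qed.

Local Open Scope ring_scope.

Lemma sum_ord_parity (R : nmodType) N (F : nat -> R) :
  \sum_(j < N.+1) F j = \sum_(m < N./2.+1) F m.*2 + \sum_(m < uphalf N) F m.*2.+1.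
Proof.
elim: N => [|N IH]; first by rewrite !big_ord1 big_ord0 addr0.
rewrite big_ord_recr /= IH; case: (boolP (odd N)) => [N_odd | N_even].
- rewrite [in RHS]big_ord_recr /= (odd_uphalfK N_odd) uphalf_half N_odd.
  by rewrite addrAC.
- rewrite [X in _ = _ + X]big_ord_recr /= (even_halfK N_even) uphalf_half (negbTE N_even).
  by rewrite addrA.
Qed.

(* A prefix of [s] that is empty or ends with an element of [p] is determined
   by the number of elements of [p] it contains. *)
Lemma sum_prefixes_by_count {R : nmodType} {T : Type} (p : pred T) (x0 : T) s
    (F : nat -> R) : p x0 ->
  \sum_(i < (size s).+1) (if p (last x0 (take i s)) then F (count p (take i s)) else 0)
  = \sum_(j < (count p s).+1) F j.
Proof.
elim: s x0 F => [|y s IH] x0 F p_x0; first by rewrite !big_ord1 /= p_x0.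
rewrite big_ord_recl /= p_x0; case: (boolP (p y)) => [p_y | not_p_y].
  by rewrite (IH y (fun j => F j.+1)) // [in RHS]big_ord_recl.
rewrite -(IH x0 F p_x0) [in RHS]big_ord_recl [X in _ + X]big_ord_recl /=.
rewrite !add0n !take0 /= (negbTE not_p_y) p_x0 add0r; congr (_ + _).
apply: eq_bigr => i _; rewrite /bump /= !add1n.
by case: s i {IH} => [[]|z s].
Qed.

Section CentralBinomialSeries.
Variable K : fieldType.
Hypothesis two_neq0 : (2%:R : K) != 0.

(* Coefficients of (1 - x)^(-1/2) and of (1 - x)^(1/2) = (1 - x) (1 - x)^(-1/2). *)
Definition invsqrt_coef (m : nat) : K := 'C(m.*2, m)%:R / (4 ^ m)%:R.
Definition sqrt_coef (m : nat) : K :=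
  if m is m'.+1 then invsqrt_coef m'.+1 - invsqrt_coef m' else 1.

Lemma natr4_neq0 : 4%:R != 0 :> K.
Proof. by rewrite (natrM K 2 2) mulf_neq0. Qed.

Lemma natr_exp4_neq0 m : (4 ^ m)%:R != 0 :> K.
Proof. by rewrite natrX expf_neq0 // natr4_neq0. Qed.

Lemma invsqrt_coef0 : invsqrt_coef 0 = 1.
Proof. by rewrite /invsqrt_coef bin0 divr1. Qed.

Lemma invsqrt_coef_conv M : \sum_(t < M.+1) invsqrt_coef t * invsqrt_coef (M - t) = 1.
Proof.
under eq_bigr => t _.
  rewrite /invsqrt_coef mulf_div -!natrM -expnD subnKC; last by rewrite -ltnS.
  over.
by rewrite -mulr_suml -natr_sum sum_bin_center divff // natr_exp4_neq0.
Qed.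

Lemma sqrt_coef_conv M : \sum_(t < M.+1) sqrt_coef t * invsqrt_coef (M - t) = (M == 0)%:R.
Proof.
case: M => [|M]; first by rewrite big_ord1 mul1r subn0 invsqrt_coef0.
have shifted : \sum_(t < M.+1) invsqrt_coef t.+1 * invsqrt_coef (M - t) =
               1 - invsqrt_coef M.+1.
  rewrite -(invsqrt_coef_conv M.+1) [in RHS]big_ord_recl invsqrt_coef0 mul1r subn0 addrC addKr.
  by apply: eq_bigr => t _; rewrite /= subSS.
rewrite big_ord_recl mul1r.
under eq_bigr => t _ do rewrite /= subSS mulrBl.
by rewrite sumrB shifted invsqrt_coef_conv subn0 /=; ring.
Qed.

(* With c(y) = (1 - y)^(-1/2), the sum is the coefficient of x^N in
   (1 - x) c(x^2) * (1 + x) c(x^2) = 1. *)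
Lemma invsqrt_coef_alt N : (0 < N)%N ->
  \sum_(j < N.+1) (-1) ^+ j * invsqrt_coef j./2 * invsqrt_coef (N - j)./2 = 0.
Proof.
move=> N_gt0.
pose F j := (-1) ^+ j * invsqrt_coef j./2 * invsqrt_coef (N - j)./2.
rewrite (@sum_ord_parity _ N F).
have [U uphalfN] : exists U, uphalf N = U.+1.
  by exists (uphalf N).-1; rewrite prednK // uphalf_gt0.
have evens : \sum_(m < N./2.+1) F m.*2
           = \sum_(m < N./2.+1) invsqrt_coef m * invsqrt_coef (N./2 - m).
  apply: eq_bigr => m _; rewrite /F -signr_odd odd_double mul1r doubleK.
  by congr (_ * invsqrt_coef _); have := ltn_ord m; lia.
have odds : \sum_(m < U.+1) F m.*2.+1
          = - \sum_(m < U.+1) invsqrt_coef m * invsqrt_coef (U - m).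
  rewrite -sumrN; apply: eq_bigr => m _.
  rewrite /F -signr_odd /= odd_double mulN1r uphalf_double mulNr.
  by congr (- (_ * invsqrt_coef _)); move: uphalfN (ltn_ord m); rewrite uphalf_half; lia.
by rewrite uphalfN evens odds !invsqrt_coef_conv subrr.
Qed.

Lemma sqrt_coefS m : sqrt_coef m.+1 = - (bcat 1 m)%:R / (4 ^ m.+1)%:R.
Proof.
have bcat1_cast : (bcat 1 m)%:R = (4 * 'C(m.*2, m))%:R - 'C(m.+1.*2, m.+1)%:R :> K.
  by rewrite -bcat1E natrD addrK.
rewrite /sqrt_coef /invsqrt_coef bcat1_cast expnS !natrM.
by field; rewrite natr_exp4_neq0 natr4_neq0.
Qed.

Lemma invsqrt_coefE m : invsqrt_coef m = (bcat 0 m)%:R / (2 ^ (2 * m))%:R.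
Proof. by rewrite /invsqrt_coef bcat0E expnM. Qed.

End CentralBinomialSeries.

Lemma conv_recr (K : fieldType) (f g : seq nat -> K) a :
  conv f g a = \sum_(i < size a) f (take i a) * g (drop i a) + f a * g [::].
Proof. by rewrite /conv big_ord_recr /= take_size drop_size. Qed.

Lemma conv_cons (K : fieldType) (f g : seq nat -> K) x s :
  conv f g (x :: s) = f [::] * g (x :: s)
    + \sum_(i < size s) f (take i.+1 (x :: s)) * g (drop i.+1 (x :: s)) + f (x :: s) * g [::].
Proof. by rewrite conv_recr big_ord_recl take0 drop0. Qed.

Section ExplicitFactors.
Variable K : fieldType.
Hypothesis two_neq0 : (2%:R : K) != 0.

(* [head 1 a] and [last 1 a] are odd for the empty composition, so that the
   same formulas give the value 1 there. *)
Definition zetam (a : seq nat) : K :=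
  if odd (last 1%N a) then (-1) ^+ ke a * invsqrt_coef K (ko a)./2 else 0.

Definition zetap (a : seq nat) : K :=
  if [&& odd (head 1%N a), odd (last 1%N a) & ~~ odd (sumn a)]
  then (-1) ^+ ke a * sqrt_coef K (ko a)./2
  else if (size a == 1%N) && ~~ odd (sumn a) then 1 else 0.

Lemma zetam_nil : zetam [::] = 1.
Proof. by rewrite /zetam /= mul1r invsqrt_coef0. Qed.

Lemma zetap_nil : zetap [::] = 1.
Proof. by rewrite /zetap /= mul1r. Qed.

Lemma zetap_even a : bar zetap a = zetap a.
Proof.
by rewrite /bar /zetap -signr_odd; case: (odd (sumn a)); rewrite /= ?andbF ?mulr0 ?mul1r.
Qed.

Lemma zetam_drop_odd a i : odd (last 1%N a) ->
  (-1) ^+ ke (take i a) * zetam (drop i a) =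
  (-1) ^+ ke a * invsqrt_coef K (ko a - ko (take i a))./2.
Proof.
move=> last_odd.
have drop_odd : odd (last 1%N (drop i a)) by rewrite last_drop; case: ifP.
rewrite /zetam drop_odd mulrA -exprD.
by rewrite /ke /ko count_take_drop -(count_take_drop odd i a) addKn.
Qed.

Lemma zetam_drop_even a i : ~~ odd (last 1%N a) -> (i < size a)%N -> zetam (drop i a) = 0.
Proof. by move=> last_even lt_i; rewrite /zetam last_drop lt_i (negbTE last_even). Qed.

Lemma zetap_head_odd a : odd (head 1%N a) ->
  zetap a = if odd (last 1%N a) && ~~ odd (ko a)
            then (-1) ^+ ke a * sqrt_coef K (ko a)./2 else 0.
Proof.
move=> head_odd; rewrite /zetap head_odd odd_sumn /=; case: ifP => // _.
by case: a head_odd => [|x [|y s]] //= x_odd; rewrite /ko /= x_odd.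
Qed.

Lemma conv_bar_zetam a : conv (bar zetam) zetam a = eps K a.
Proof.
case: a => [|x s]; first by rewrite /conv big_ord1 /bar /= expr0 mul1r zetam_nil mulr1.
set a := x :: s; have [last_odd | last_even] := boolP (odd (last 1%N a)); last first.
  rewrite conv_recr big1 => [|i _]; last by rewrite zetam_drop_even ?mulr0.
  by rewrite /bar {1}/zetam (negbTE last_even) mulr0 mul0r add0r.
have ko_gt0 : (0 < ko a)%N by apply: count_last_gt0.
pose F j := (-1) ^+ ke a * ((-1) ^+ j * invsqrt_coef K j./2 * invsqrt_coef K (ko a - j)./2).
transitivity (\sum_(j < (ko a).+1) F j); last by rewrite /F -mulr_sumr invsqrt_coef_alt ?mulr0.
rewrite /conv -(sum_prefixes_by_count (p := odd) (x0 := 1%N) a F) //.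
apply: eq_bigr => i _; rewrite /bar {1}/zetam; case: ifP => _; last by rewrite mulr0 mul0r.
rewrite -signr_odd odd_sumn signr_odd mulrCA mulrAC zetam_drop_odd // /F -/(ko _).
ring.
Qed.

Lemma conv_zetap_zetam_last_even a : ~~ odd (last 1%N a) -> conv zetap zetam a = zeta K a.
Proof.
move=> last_even; rewrite conv_recr big1 => [|i _]; last by rewrite zetam_drop_even ?mulr0.
rewrite zetam_nil mulr1 add0r /zetap (negbTE last_even) andbF.
by case: a last_even => [|x [|y s]] //= x_even; rewrite addn0 x_even.
Qed.

Lemma conv_zetap_zetam_odd_ends a : odd (head 1%N a) -> odd (last 1%N a) ->
  conv zetap zetam a = (-1) ^+ ke a * ((ko a)./2 == 0%N)%:R.
Proof.
move=> head_odd last_odd; set N := ko a.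
pose G j := (if odd j then 0 else sqrt_coef K j./2) * invsqrt_coef K (N - j)./2.
pose F j := (-1) ^+ ke a * G j.
transitivity (\sum_(j < N.+1) F j).
  rewrite /conv -(sum_prefixes_by_count (p := odd) (x0 := 1%N) a F) //.
  apply: eq_bigr => i _; rewrite zetap_head_odd; last by rewrite head_take; case: ifP.
  case: (odd (last 1%N (take i a))); last by rewrite mul0r.
  rewrite /F /G -/(ko _); case: (odd (ko (take i a))); first by rewrite !mul0r mulr0.
  by rewrite mulrAC zetam_drop_odd // -mulrA (mulrC (invsqrt_coef _ _)).
have parity : \sum_(j < N.+1) G j = \sum_(m < N./2.+1) sqrt_coef K m * invsqrt_coef K (N./2 - m).
  rewrite (@sum_ord_parity _ N G) [X in _ + X]big1 ?addr0 => [|m _]; last first.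
    by rewrite /G /= odd_double mul0r.
  apply: eq_bigr => m _; rewrite /G odd_double doubleK.
  by congr (_ * invsqrt_coef K _); have := ltn_ord m; lia.
by rewrite /F -mulr_sumr parity sqrt_coef_conv.
Qed.

Lemma zetam_cons_even x s : ~~ odd x -> s != [::] -> zetam (x :: s) = - zetam s.
Proof.
case: s => [|y s] // x_even _.
rewrite /zetam /ke /ko /= (negbTE x_even) add1n add0n exprS mulN1r.
by case: ifP; rewrite ?oppr0 ?mulNr.
Qed.

Lemma conv_zetap_zetam_head_even x s : ~~ odd x -> odd (last x s) ->
  conv zetap zetam (x :: s) = 0.
Proof.
case: s => [|y s] x_even last_odd; first by rewrite last_odd in x_even.
rewrite /conv 2!big_ord_recl big1 => [|i _]; last by rewrite /zetap /= (negbTE x_even) mul0r.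
rewrite /= zetap_nil mul1r zetam_cons_even // /zetap /= addn0 (negbTE x_even) /=.
by rewrite mul1r addr0 addNr.
Qed.

Lemma conv_zetap_zetam a : conv zetap zetam a = zeta K a.
Proof.
have [last_odd | ] := boolP (odd (last 1%N a)); last exact: conv_zetap_zetam_last_even.
case: a last_odd => [|x s] /= last_odd; first by rewrite conv_zetap_zetam_odd_ends // expr0 mulr1.
have [x_odd | x_even] := boolP (odd x); last first.
  rewrite conv_zetap_zetam_head_even //.
  by case: s last_odd => [|y s] //= x_odd; rewrite x_odd in x_even.
rewrite conv_zetap_zetam_odd_ends //; case: s last_odd => [|y s] last_odd.
  by rewrite /ke /ko /= x_odd /= mulr1.
have ko_ge2 : (2 <= ko [:: x, y & s])%N by rewrite /ko /= x_odd add1n ltnS count_last_gt0.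
by rewrite -[_ == 0%N]negbK -lt0n half_gt0 ko_ge2 mulr0.
Qed.

End ExplicitFactors.

Section Uniqueness.
Variable K : fieldType.
Hypothesis two_neq0 : (2%:R : K) != 0.

Lemma eq_sign_parts (b : bool) (x y x' y' : K) :
  x + y = x' + y' -> (-1) ^+ b * x + x = (-1) ^+ b * x' + x' ->
  (-1) ^+ b * y = y -> (-1) ^+ b * y' = y' -> x = x' /\ y = y'.
Proof.
have half (z : K) : z + z = 0 -> z = 0.
  by move/eqP; rewrite -mulr2n -mulr_natr mulf_eq0 (negbTE two_neq0) orbF => /eqP.
case: b => /=; rewrite ?expr1 ?expr0 ?mulN1r ?mul1r => sum_eq x_eq y_sym y'_sym.
  have y0 : y = 0 by apply: half; rewrite -{1}y_sym addNr.
  have y'0 : y' = 0 by apply: half; rewrite -{1}y'_sym addNr.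
  by move: sum_eq; rewrite y0 y'0 !addr0.
have x_eq' : x = x'.
  by apply/eqP; rewrite -subr_eq0; apply/eqP/half; rewrite addrACA -opprD x_eq subrr.
by move: sum_eq; rewrite x_eq' => /addrI.
Qed.

Variables zp zm zp' zm' : seq nat -> K.
Hypotheses (zp_nil : zp [::] = 1) (zm_nil : zm [::] = 1).
Hypotheses (zp'_nil : zp' [::] = 1) (zm'_nil : zm' [::] = 1).
Hypothesis zp_even : forall a, is_composition a -> bar zp a = zp a.
Hypothesis zp'_even : forall a, is_composition a -> bar zp' a = zp' a.
Hypothesis eq_conv_bar :
  forall a, is_composition a -> conv (bar zm) zm a = conv (bar zm') zm' a.
Hypothesis eq_conv : forall a, is_composition a -> conv zp zm a = conv zp' zm' a.

Lemma even_odd_factors_unique a : is_composition a -> zm a = zm' a /\ zp a = zp' a.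
Proof.
have [n] := ubnP (size a); elim: n a => // n IH [|x s] size_lt a_comp.
  by rewrite zm_nil zp_nil.
set a := x :: s in size_lt a_comp *.
have IH_cut (i : 'I_(size s)) :
    [/\ zm (take i.+1 a) = zm' (take i.+1 a), zp (take i.+1 a) = zp' (take i.+1 a)
      & zm (drop i.+1 a) = zm' (drop i.+1 a)].
  have lt_take : (size (take i.+1 a) < n)%N.
    by rewrite size_take_min; move: size_lt (ltn_ord i) => /=; lia.
  have lt_drop : (size (drop i.+1 a) < n)%N.
    by rewrite size_drop; move: size_lt (ltn_ord i) => /=; lia.
  have [zm_take zp_take] := IH _ lt_take (is_composition_take _ a_comp).
  by have [zm_drop _] := IH _ lt_drop (is_composition_drop _ a_comp).
have sum_eq : zm a + zp a = zm' a + zp' a.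
  have := eq_conv a_comp; rewrite !conv_cons zp_nil zm_nil zp'_nil zm'_nil !mul1r !mulr1.
  set M := \sum_(i < size s) _; set M' := \sum_(i < size s) _.
  have -> : M = M' by apply: eq_bigr => i _; have [_ -> ->] := IH_cut i.
  by rewrite ![_ + M' + _]addrAC => /addIr.
have bar_eq : (-1) ^+ odd (sumn a) * zm a + zm a = (-1) ^+ odd (sumn a) * zm' a + zm' a.
  have := eq_conv_bar a_comp; rewrite !conv_cons /bar zm_nil zm'_nil !signr_odd !mulr1 !mul1r.
  set M := \sum_(i < size s) _; set M' := \sum_(i < size s) _.
  have -> : M = M' by apply: eq_bigr => i _; have [-> _ ->] := IH_cut i.
  by rewrite ![_ + M' + _]addrAC => /addIr; rewrite addrC [RHS]addrC.
apply: eq_sign_parts sum_eq bar_eq _ _; rewrite signr_odd.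
  exact: zp_even.
exact: zp'_even.
Qed.

End Uniqueness.

Section ClosedForms.
Variable K : fieldType.
Hypothesis two_neq0 : (2%:R : K) != 0.

Lemma zetamE a : a != [::] ->
  zetam K a = if odd (last 0%N a)
              then (-1) ^+ ke a / (2 ^ (2 * (ko a)./2))%:R * (bcat 0 (ko a)./2)%:R
              else 0.
Proof. by case: a => [|x s] // _; rewrite /zetam invsqrt_coefE mulrA mulrAC. Qed.

Lemma zetapE a : a != [::] ->
  zetap K a = if [&& odd (head 0%N a), odd (last 0%N a) & ~~ odd (sumn a)]
              then (-1) ^+ (ke a).+1 / (2 ^ ko a)%:R * (bcat 1 ((ko a)./2 - 1))%:R
              else if (size a == 1%N) && ~~ odd (sumn a) then 1 else 0.
Proof.
case: a => [|x s] // _; set a := x :: s.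
rewrite /zetap; have [-> ->] : head 1%N a = head 0%N a /\ last 1%N a = last 0%N a by [].
case: ifP => // /and3P[x_odd _ sum_even].
have ko_even : ~~ odd (ko a) by rewrite -odd_sumn.
have ko_gt1 : (1 < ko a)%N.
  have ko_gt0 : (0 < ko a)%N by rewrite /ko /= x_odd.
  by rewrite ltn_neqAle ko_gt0 andbT; apply: contraNneq ko_even => <-.
have [m half_ko] : exists m, (ko a)./2 = m.+1 by exists (ko a)./2.-1; rewrite prednK // half_gt0.
rewrite -{2}(even_halfK ko_even) half_ko sqrt_coefS // subn1 /= -mul2n expnM exprS.
by rewrite -[(2 ^ 2)%N]/4%N; ring.
Qed.

End ClosedForms.

Theorem theorem3p2 (K : fieldType) (char2 : (2%:R : K) != 0)
    (zp zm : seq nat -> K) :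
  is_character zp -> is_character zm -> is_even zp -> is_odd zm ->
  (forall a, is_composition a -> zeta K a = conv zp zm a) ->
  zm [::] = 1 /\ zp [::] = 1 /\
  forall a : seq nat, is_composition a -> (0 < sumn a)%N ->
    zm a = (if odd (last 0%N a)
            then (-1) ^+ ke a / (2 ^ (2 * (ko a)./2))%:R * (bcat 0 (ko a)./2)%:R
            else 0) /\
    zp a = (if [&& odd (head 0%N a), odd (last 0%N a) & ~~ odd (sumn a)]
            then (-1) ^+ (ke a).+1 / (2 ^ ko a)%:R * (bcat 1 ((ko a)./2 - 1))%:R
            else if (size a == 1%N) && ~~ odd (sumn a) then 1 else 0).
Proof.
move=> [zp_nil _] [zm_nil _] zp_even zm_odd zeta_conv.
have conv_bar_eq a : is_composition a -> conv (bar zm) zm a = conv (bar (zetam K)) (zetam K) a.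
  by move=> a_comp; rewrite (zm_odd a a_comp).1 (conv_bar_zetam char2).
have conv_eq a : is_composition a -> conv zp zm a = conv (zetap K) (zetam K) a.
  by move=> a_comp; rewrite -zeta_conv // (conv_zetap_zetam char2).
have zm_zp_eq := even_odd_factors_unique char2 zp_nil zm_nil (zetap_nil K) (zetam_nil K)
  zp_even (fun a _ => zetap_even K a) conv_bar_eq conv_eq.
split=> //; split=> // a a_comp sumn_gt0.
have a_nonnil : a != [::] by apply: contraTneq sumn_gt0 => ->.
by have [-> ->] := zm_zp_eq a a_comp; rewrite zetamE // zetapE.
Qed.
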